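(* Let $\mu>0$ and $d\in(0,1)$. For integers $N,L\ge1$ let $M=N+L$ and let $(\tau_1,\dots,\tau_M)\in\{0,1\}^M$ be uniformly distributed among configurations with $\sum_i\tau_i=N$ (the stationary distribution of TASEP on a ring of $M$ sites with $N$ particles), with $\tau_{M+1}=\tau_1$. Define $\phi=\frac{\mu}{M}\sum_{i=1}^M\tau_i(1-\tau_{i+1})$. Then as $N,L\to\infty$ with $N/(N+L)\to d$, $$L\cdot\mathrm{Var}(\phi)\longrightarrow \mu^2\,d^2(1-d)^3,$$ i.e. $\mathrm{Var}(\phi)=\frac{1-d}{L}\,d^2(1-d)^2\mu^2+o(1/L)$. *)

From Stdlib Require Import Reals List Arith.
Import ListNotations.
Open Scope R_scope.

Fixpoint bool_lists (n : nat) : list (list bool) :=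
  match n with
  | O => [nil]
  | S n' => map (cons true) (bool_lists n') ++ map (cons false) (bool_lists n')
  end.

Definition nparticles (t : list bool) : nat := length (filter (fun b => b) t).

(* Support of the uniform (stationary TASEP) measure: configurations of
   length M with exactly N particles. Each appears exactly once. *)
Definition configs (M N : nat) : list (list bool) :=
  filter (fun t => Nat.eqb (nparticles t) N) (bool_lists M).

Definition b2R (b : bool) : R := if b then 1 else 0.

(* tau_i for sites i = 0..M-1 (0-indexed), periodic: tau_M = tau_0. *)
Definition tau (M : nat) (t : list bool) (i : nat) : R := b2R (nth (i mod M) t false).

Definition sumR (f : nat -> R) (n : nat) : R :=
  fold_right Rplus 0 (map f (seq 0 n)).

Definition phi (mu : R) (M : nat) (t : list bool) : R :=
  mu / INR M * sumR (fun i => tau M t i * (1 - tau M t (S i))) M.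

Definition Expect (M N : nat) (f : list bool -> R) : R :=
  fold_right Rplus 0 (map f (configs M N)) / INR (length (configs M N)).

Definition Var (M N : nat) (f : list bool -> R) : R :=
  Expect M N (fun t => (f t - Expect M N f) ^ 2).

Definition Var_phi (mu : R) (N L : nat) : R :=
  Var (N + L) N (phi mu (N + L)).

From Stdlib Require Import Reals List Arith Lia Lra.
From Coquelicot Require Import Rbar Lim_seq.
Open Scope R_scope.
Open Scope bool_scope.

(* Write phi = (mu/M) X with X(t) = sum_i Y_i(t), Y_i = tau_i (1 - tau_{i+1}).
   Both moments of X are computed exactly by counting: the configurations of
   length M with N particles that agree with a partial assignment fixing k sites,
   a of them to 1, number C(M-k, N-a)  ([count_matching_binom]).
   - Each Y_i fixes two sites, one occupied: sum_t X = M C(M-2, N-1).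
   - Y_i Y_i = Y_i, adjacent hops exclude each other (Y_i Y_{i+1} = 0), and
     two disjoint hops fix four sites, two occupied:
     sum_t X^2 = M (C(M-2, N-1) + (M-3) C(M-4, N-2)).
   Dividing by #configurations = C(M,N) gives, for N, L >= 2, the exact formula
     L Var(phi) = mu^2 L^2 N (N L - M + 1) / (M^2 (M-1)^2 (M-2)),
   a rational function of x = N/M and e = 1/M that is continuous at (d, 0),
   where it equals mu^2 d^2 (1-d)^3.  Since x -> d and e -> 0, the theorem follows. *)

Fixpoint binom (n k : nat) : nat :=
  match n, k with
  | _, O => 1%nat
  | O, S _ => 0%nat
  | S n', S k' => (binom n' k' + binom n' (S k'))%nat
  end.

Lemma binom_0_r (n : nat) : binom n 0 = 1%nat.
Proof. destruct n; reflexivity. Qed.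

Lemma binom_large (n k : nat) : (n < k)%nat -> binom n k = 0%nat.
Proof.
  revert k; induction n as [|n IH]; intros [|k] H; simpl; try lia; try reflexivity.
  rewrite !IH; lia.
Qed.

Lemma binom_fact (n k : nat) : (k <= n)%nat ->
  (binom n k * fact k * fact (n - k) = fact n)%nat.
Proof.
  revert k; induction n as [|n IH]; intros [|k] H; simpl binom.
  - reflexivity.
  - lia.
  - rewrite Nat.sub_0_r. simpl. lia.
  - replace (S n - S k)%nat with (n - k)%nat by lia.
    destruct (Nat.eq_dec k n) as [<-|Hkn].
    + rewrite (binom_large k (S k)), Nat.sub_diag by lia.
      specialize (IH k (le_n k)). rewrite Nat.sub_diag in IH.
      rewrite (fact_simpl k). simpl fact in *. nia.
    + pose proof (IH k ltac:(lia)) as Hk.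
      pose proof (IH (S k) ltac:(lia)) as HSk.
      replace (n - k)%nat with (S (n - S k)) in * by lia.
      rewrite fact_simpl in Hk. rewrite (fact_simpl k) in HSk.
      rewrite (fact_simpl (n - S k)), (fact_simpl k), (fact_simpl n). nia.
Qed.

Lemma binom_INR (n k : nat) : (k <= n)%nat ->
  INR (binom n k) = INR (fact n) / (INR (fact k) * INR (fact (n - k))).
Proof.
  intros H. rewrite <- (binom_fact n k H), !mult_INR.
  assert (INR (fact k) <> 0) by (apply not_0_INR, fact_neq_0).
  assert (INR (fact (n - k)) <> 0) by (apply not_0_INR, fact_neq_0).
  field. auto.
Qed.

(** * Counting configurations that match a pattern *)

(* A pattern prescribes the value of some sites (Some b) and leaves the others
   free (None).  Matching is read off a list from site 0 onwards. *)
Definition pattern := nat -> option bool.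

Definition free_pattern : pattern := fun _ => None.

Definition tail_pattern (c : pattern) : pattern := fun i => c (S i).

Definition set_site (c : pattern) (i : nat) (v : bool) : pattern :=
  fun p => if Nat.eqb p i then Some v else c p.

Definition agrees (b : bool) (o : option bool) : bool :=
  match o with Some v => Bool.eqb b v | None => true end.

Fixpoint matches (c : pattern) (t : list bool) : bool :=
  match t with
  | nil => true
  | b :: t' => agrees b (c O) && matches (tail_pattern c) t'
  end.

Fixpoint n_fixed (c : pattern) (M : nat) : nat :=
  match M with
  | O => O
  | S M' => ((if c O then 1 else 0) + n_fixed (tail_pattern c) M')%nat
  end.

Fixpoint n_forced (c : pattern) (M : nat) : nat :=
  match M with
  | O => O
  | S M' => ((match c O with Some true => 1 | _ => 0 end) + n_forced (tail_pattern c) M')%nat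
  end.

Lemma n_fixed_le (c : pattern) (M : nat) : (n_fixed c M <= M)%nat.
Proof.
  revert c; induction M as [|M IH]; intros c; simpl; auto.
  specialize (IH (tail_pattern c)). destruct (c O); lia.
Qed.

Lemma matches_free (t : list bool) : matches free_pattern t = true.
Proof. induction t as [|b t IH]; simpl; auto. Qed.

Lemma n_fixed_free (M : nat) : n_fixed free_pattern M = O.
Proof. induction M as [|M IH]; simpl; auto. Qed.

Lemma n_forced_free (M : nat) : n_forced free_pattern M = O.
Proof. induction M as [|M IH]; simpl; auto. Qed.

Lemma matches_set_site (t : list bool) (c : pattern) (i : nat) (v : bool) :
  (i < length t)%nat -> c i = None ->
  matches (set_site c i v) t = matches c t && Bool.eqb (nth i t false) v.
Proof.
  revert c i; induction t as [|b t IH]; intros c i Hi Hc; simpl in *; [lia|].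
  destruct i as [|i].
  - change (tail_pattern (set_site c 0 v)) with (tail_pattern c).
    unfold set_site at 1; simpl. rewrite Hc. simpl.
    destruct (matches (tail_pattern c) t), (Bool.eqb b v); reflexivity.
  - change (tail_pattern (set_site c (S i) v)) with (set_site (tail_pattern c) i v).
    unfold set_site at 1; simpl.
    rewrite IH by (auto; lia). apply Bool.andb_assoc.
Qed.

Lemma n_fixed_set_site (M : nat) (c : pattern) (i : nat) (v : bool) :
  (i < M)%nat -> c i = None ->
  n_fixed (set_site c i v) M = S (n_fixed c M) /\
  n_forced (set_site c i v) M = ((if v then 1 else 0) + n_forced c M)%nat.
Proof.
  revert c i; induction M as [|M IH]; intros c i Hi Hc; simpl in *; [lia|].
  destruct i as [|i].
  - change (tail_pattern (set_site c 0 v)) with (tail_pattern c).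
    change (set_site c 0 v O) with (Some v). rewrite Hc. destruct v; split; reflexivity.
  - change (tail_pattern (set_site c (S i) v)) with (set_site (tail_pattern c) i v).
    change (set_site c (S i) v O) with (c O).
    destruct (IH (tail_pattern c) i ltac:(lia) Hc) as [-> ->].
    destruct (c O) as [[|]|], v; split; lia.
Qed.

Definition count_matching (M N : nat) (c : pattern) : nat :=
  length (filter (fun t => Nat.eqb (nparticles t) N && matches c t) (bool_lists M)).

Lemma length_filter_map {A B : Type} (p : B -> bool) (f : A -> B) (l : list A) :
  length (filter p (map f l)) = length (filter (fun x => p (f x)) l).
Proof. induction l as [|a l IH]; simpl; auto. destruct (p (f a)); simpl; auto. Qed.

Lemma length_filter_false {A : Type} (p : A -> bool) (l : list A) :
  (forall x, p x = false) -> length (filter p l) = O.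
Proof. intros H. induction l as [|a l IH]; simpl; auto. rewrite H; auto. Qed.

Lemma nparticles_cons (b : bool) (t : list bool) :
  nparticles (b :: t) = ((if b then 1 else 0) + nparticles t)%nat.
Proof. unfold nparticles. destruct b; reflexivity. Qed.

Lemma count_matching_S (M N : nat) (c : pattern) :
  count_matching (S M) N c =
  ((if agrees true (c O) then
      match N with O => O | S N' => count_matching M N' (tail_pattern c) end else O) +
   (if agrees false (c O) then count_matching M N (tail_pattern c) else O))%nat.
Proof.
  unfold count_matching. simpl bool_lists.
  rewrite filter_app, length_app, !length_filter_map. f_equal.
  - destruct (agrees true (c O)) eqn:E; [destruct N as [|N]|].
    + apply length_filter_false. intro x. rewrite nparticles_cons. reflexivity.
    + f_equal. apply filter_ext. intro x. rewrite nparticles_cons. simpl. rewrite E. reflexivity.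
    + apply length_filter_false. intro x. simpl. rewrite E. apply Bool.andb_false_r.
  - destruct (agrees false (c O)) eqn:E.
    + f_equal. apply filter_ext. intro x. rewrite nparticles_cons. simpl. rewrite E. reflexivity.
    + apply length_filter_false. intro x. simpl. rewrite E. apply Bool.andb_false_r.
Qed.

Lemma count_matching_too_few (M N : nat) (c : pattern) :
  (N < n_forced c M)%nat -> count_matching M N c = O.
Proof.
  revert N c; induction M as [|M IH]; intros N c H; simpl in H; [lia|].
  rewrite count_matching_S. destruct (c O) as [[|]|]; simpl.
  - destruct N as [|N]; auto. rewrite IH by lia. lia.
  - rewrite IH by lia. reflexivity.
  - destruct N as [|N]; rewrite !IH by lia; reflexivity.
Qed.

(* The counting principle: the free sites carry the N remaining particles. *)
Lemma count_matching_binom (M N : nat) (c : pattern) :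
  count_matching M (N + n_forced c M) c = binom (M - n_fixed c M) N.
Proof.
  revert N c; induction M as [|M IH]; intros N c.
  - rewrite Nat.add_0_r. unfold count_matching. destruct N; reflexivity.
  - rewrite count_matching_S. pose proof (n_fixed_le (tail_pattern c) M).
    simpl n_fixed; simpl n_forced.
    destruct (c O) as [[|]|]; cbn [agrees Bool.eqb]; rewrite ?Nat.add_0_l.
    + rewrite Nat.add_succ_r, IH, Nat.add_0_r. reflexivity.
    + rewrite IH. reflexivity.
    + replace (S M - n_fixed (tail_pattern c) M)%nat
        with (S (M - n_fixed (tail_pattern c) M)) by lia.
      destruct N as [|N]; cbn [Nat.add].
      * rewrite binom_0_r, <- (binom_0_r (M - n_fixed (tail_pattern c) M)), <- IH.
        destruct (n_forced (tail_pattern c) M) eqn:Ef; [reflexivity|].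
        rewrite count_matching_too_few by lia. reflexivity.
      * rewrite <- Nat.add_succ_l, !IH. reflexivity.
Qed.

Lemma count_configs (M N : nat) : length (configs M N) = binom M N.
Proof.
  pose proof (count_matching_binom M N free_pattern) as H.
  rewrite n_forced_free, n_fixed_free, Nat.add_0_r, Nat.sub_0_r in H.
  rewrite <- H. unfold configs, count_matching. f_equal. apply filter_ext. intro t.
  rewrite matches_free, Bool.andb_true_r. reflexivity.
Qed.

Definition sumL {A : Type} (l : list A) (f : A -> R) : R := fold_right Rplus 0 (map f l).

Lemma sumL_ext {A : Type} (l : list A) (f g : A -> R) :
  (forall x, In x l -> f x = g x) -> sumL l f = sumL l g.
Proof.
  induction l as [|a l IH]; intros H; unfold sumL in *; simpl; auto.
  f_equal; [apply H | apply IH; intros; apply H]; simpl; auto.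
Qed.

Lemma sumL_plus {A : Type} (l : list A) (f g : A -> R) :
  sumL l (fun x => f x + g x) = sumL l f + sumL l g.
Proof. induction l as [|a l IH]; unfold sumL in *; simpl; [lra|]. rewrite IH. lra. Qed.

Lemma sumL_scal {A : Type} (l : list A) (c : R) (f : A -> R) :
  sumL l (fun x => c * f x) = c * sumL l f.
Proof. induction l as [|a l IH]; unfold sumL in *; simpl; [lra|]. rewrite IH. lra. Qed.

Lemma sumL_const {A : Type} (l : list A) (c : R) : sumL l (fun _ => c) = c * INR (length l).
Proof.
  induction l as [|a l IH]; unfold sumL in *; simpl length; [simpl; lra|].
  rewrite S_INR. simpl. rewrite IH. lra.
Qed.

Lemma sumL_swap {A B : Type} (l1 : list A) (l2 : list B) (F : A -> B -> R) :
  sumL l1 (fun a => sumL l2 (F a)) = sumL l2 (fun b => sumL l1 (fun a => F a b)).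
Proof.
  induction l1 as [|a l IH]; unfold sumL at 1; simpl.
  - rewrite <- (Rmult_0_l (INR (length l2))), <- sumL_const. reflexivity.
  - fold (sumL l (fun a => sumL l2 (F a))). rewrite IH, <- sumL_plus. reflexivity.
Qed.

Lemma sumL_mult {A B : Type} (l1 : list A) (l2 : list B) (f : A -> R) (g : B -> R) :
  sumL l1 f * sumL l2 g = sumL l1 (fun a => sumL l2 (fun b => f a * g b)).
Proof.
  rewrite Rmult_comm, <- sumL_scal. apply sumL_ext. intros a _.
  rewrite Rmult_comm, <- sumL_scal. reflexivity.
Qed.

Lemma sumL_filter_b2R {A : Type} (l : list A) (q p : A -> bool) :
  sumL (filter q l) (fun t => b2R (p t)) = INR (length (filter (fun t => q t && p t) l)).
Proof.
  induction l as [|a l IH]; unfold sumL in *; simpl; [reflexivity|].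
  destruct (q a) eqn:Eq, (p a) eqn:Ep; cbn [filter map fold_right length andb];
    rewrite ?Eq, ?Ep; cbn [andb length]; rewrite ?S_INR, ?IH; unfold b2R; rewrite ?Ep; lra.
Qed.

Lemma sumR_S (f : nat -> R) (n : nat) : sumR f (S n) = sumR f n + f n.
Proof.
  unfold sumR. rewrite seq_S, map_app, fold_right_app. simpl.
  induction (map f (seq 0 n)); simpl; lra.
Qed.

Lemma sumR_ext (f g : nat -> R) (n : nat) :
  (forall i, (i < n)%nat -> f i = g i) -> sumR f n = sumR g n.
Proof. intros H. apply sumL_ext. intros x Hx. apply in_seq in Hx. apply H; lia. Qed.

Lemma sumR_plus (f g : nat -> R) (n : nat) : sumR (fun i => f i + g i) n = sumR f n + sumR g n.
Proof. apply sumL_plus. Qed.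

Lemma sumR_const (c : R) (n : nat) : sumR (fun _ => c) n = c * INR n.
Proof.
  unfold sumR. fold (sumL (seq 0 n) (fun _ => c)).
  rewrite sumL_const, length_seq. reflexivity.
Qed.

Lemma sumR_indicator (p : nat) (a : R) (n : nat) :
  sumR (fun j => if Nat.eqb j p then a else 0) n = if Nat.ltb p n then a else 0.
Proof.
  induction n as [|n IH]; [reflexivity|]. rewrite sumR_S, IH.
  destruct (Nat.ltb_spec p n), (Nat.ltb_spec p (S n)), (Nat.eqb_spec n p); lra || lia.
Qed.

Lemma bool_lists_length (M : nat) (t : list bool) : In t (bool_lists M) -> length t = M.
Proof.
  revert t; induction M as [|M IH]; intros t H; simpl in H.
  - destruct H as [<-|[]]; reflexivity.
  - apply in_app_or in H.
    destruct H as [H|H]; apply in_map_iff in H; destruct H as [t' [<- Ht']]; simpl; auto.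
Qed.

Lemma configs_length (M N : nat) (t : list bool) : In t (configs M N) -> length t = M.
Proof. unfold configs. intros H. apply filter_In in H. apply bool_lists_length, H. Qed.

Lemma sum_configs_matches (M N : nat) (c : pattern) :
  sumL (configs M N) (fun t => b2R (matches c t)) = INR (count_matching M N c).
Proof. apply sumL_filter_b2R. Qed.

Definition hop_indicator (p q : nat) (t : list bool) : R :=
  b2R (nth p t false) * (1 - b2R (nth q t false)).

Lemma hop_indicator_idem (p q : nat) (t : list bool) :
  hop_indicator p q t * hop_indicator p q t = hop_indicator p q t.
Proof. unfold hop_indicator. destruct (nth p t false), (nth q t false); simpl; lra. Qed.

(* A particle and a hole cannot sit on the same site: (p,q) and (q,r) exclude each other. *)
Lemma hop_indicator_chain (p q r : nat) (t : list bool) :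
  hop_indicator p q t * hop_indicator q r t = 0.
Proof. unfold hop_indicator. destruct (nth p t false), (nth q t false); simpl; lra. Qed.

Lemma matches_hop (c : pattern) (p q : nat) (t : list bool) :
  (p < length t)%nat -> (q < length t)%nat -> p <> q -> c p = None -> c q = None ->
  b2R (matches (set_site (set_site c p true) q false) t) = b2R (matches c t) * hop_indicator p q t.
Proof.
  intros Hp Hq Hpq Hcp Hcq.
  assert (Hcq' : set_site c p true q = None).
  { unfold set_site. rewrite (proj2 (Nat.eqb_neq q p)) by auto. exact Hcq. }
  rewrite !matches_set_site by auto. unfold hop_indicator.
  destruct (matches c t), (nth p t false), (nth q t false); simpl; lra.
Qed.

Lemma n_fixed_hop (c : pattern) (p q M : nat) :
  (p < M)%nat -> (q < M)%nat -> p <> q -> c p = None -> c q = None ->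
  n_fixed (set_site (set_site c p true) q false) M = S (S (n_fixed c M)) /\
  n_forced (set_site (set_site c p true) q false) M = S (n_forced c M).
Proof.
  intros Hp Hq Hpq Hcp Hcq.
  assert (Hcq' : set_site c p true q = None).
  { unfold set_site. rewrite (proj2 (Nat.eqb_neq q p)) by auto. exact Hcq. }
  destruct (n_fixed_set_site M c p true Hp Hcp) as [H1 H2].
  destruct (n_fixed_set_site M (set_site c p true) q false Hq Hcq') as [H3 H4].
  rewrite H3, H4, H1, H2. split; reflexivity.
Qed.

Definition next_site (M i : nat) : nat := if Nat.eqb (S i) M then O else S i.
Definition prev_site (M i : nat) : nat := if Nat.eqb i 0 then (M - 1)%nat else (i - 1)%nat.

Ltac ring_sites :=
  unfold next_site, prev_site in *;
  repeat match goal with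
  | |- context [Nat.eqb ?a ?b] => destruct (Nat.eqb_spec a b)
  | H : context [Nat.eqb ?a ?b] |- _ => destruct (Nat.eqb_spec a b)
  end; lia.

Lemma tau_lt (M : nat) (t : list bool) (i : nat) :
  (i < M)%nat -> tau M t i = b2R (nth i t false).
Proof. intros H. unfold tau. rewrite Nat.mod_small by auto. reflexivity. Qed.

Lemma tau_S (M : nat) (t : list bool) (i : nat) :
  (i < M)%nat -> tau M t (S i) = b2R (nth (next_site M i) t false).
Proof.
  intros H. unfold tau, next_site. destruct (Nat.eqb_spec (S i) M) as [E|E].
  - rewrite E, Nat.Div0.mod_same. reflexivity.
  - rewrite Nat.mod_small by lia. reflexivity.
Qed.

Definition current_at (M i : nat) (t : list bool) : R := tau M t i * (1 - tau M t (S i)).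
Definition total_current (M : nat) (t : list bool) : R := sumR (fun i => current_at M i t) M.

Lemma phi_total_current (mu : R) (M : nat) (t : list bool) :
  phi mu M t = mu / INR M * total_current M t.
Proof. reflexivity. Qed.

Lemma current_at_hop (M i : nat) (t : list bool) :
  (i < M)%nat -> current_at M i t = hop_indicator i (next_site M i) t.
Proof. intros H. unfold current_at, hop_indicator. rewrite tau_lt, tau_S by auto. reflexivity. Qed.

Definition hop_pattern (M i : nat) : pattern :=
  set_site (set_site free_pattern i true) (next_site M i) false.

Lemma hop_pattern_counts (M i : nat) : (2 <= M)%nat -> (i < M)%nat ->
  n_fixed (hop_pattern M i) M = 2%nat /\ n_forced (hop_pattern M i) M = 1%nat.
Proof.
  intros HM Hi.
  assert (Hne : i <> next_site M i) by ring_sites.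
  assert (Hn : (next_site M i < M)%nat) by ring_sites.
  destruct (n_fixed_hop free_pattern i (next_site M i) M Hi Hn Hne eq_refl eq_refl) as [Hk Ha].
  rewrite n_fixed_free in Hk. rewrite n_forced_free in Ha. split; assumption.
Qed.

Lemma matches_hop_pattern (M i : nat) (t : list bool) :
  (2 <= M)%nat -> (i < M)%nat -> length t = M ->
  b2R (matches (hop_pattern M i) t) = current_at M i t.
Proof.
  intros HM Hi Ht. unfold hop_pattern.
  rewrite matches_hop, matches_free, current_at_hop by (auto; ring_sites). simpl. lra.
Qed.

Lemma sum_current_at (M n i : nat) : (2 <= M)%nat -> (i < M)%nat ->
  sumL (configs M (n + 1)) (current_at M i) = INR (binom (M - 2) n).
Proof.
  intros HM Hi. destruct (hop_pattern_counts M i HM Hi) as [Hk Ha].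
  rewrite (sumL_ext _ _ (fun t => b2R (matches (hop_pattern M i) t))).
  2:{ intros t Ht. apply configs_length in Ht. rewrite matches_hop_pattern; auto. }
  rewrite sum_configs_matches.
  replace (n + 1)%nat with (n + n_forced (hop_pattern M i) M)%nat by lia.
  rewrite count_matching_binom, Hk. reflexivity.
Qed.

Lemma sum_total_current (M n : nat) : (2 <= M)%nat ->
  sumL (configs M (n + 1)) (total_current M) = INR M * INR (binom (M - 2) n).
Proof.
  intros HM. unfold total_current.
  change (sumL (configs M (n + 1)) (fun t => sumL (seq 0 M) (fun i => current_at M i t))
          = INR M * INR (binom (M - 2) n)).
  rewrite (sumL_swap (configs M (n + 1)) (seq 0 M) (fun t i => current_at M i t)).
  rewrite (sumL_ext _ _ (fun _ => INR (binom (M - 2) n))).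
  - rewrite sumL_const, length_seq. lra.
  - intros i Hi. apply in_seq in Hi. apply sum_current_at; lia.
Qed.

(* Two hops that share no site: four sites are fixed, two of them to 1. *)
Lemma sum_current_product_far (M n i j : nat) : (i < M)%nat -> (j < M)%nat ->
  (2 <= M)%nat -> j <> i -> j <> next_site M i -> j <> prev_site M i ->
  sumL (configs M (n + 2)) (fun t => current_at M i t * current_at M j t) =
  INR (binom (M - 4) n).
Proof.
  intros Hi Hj HM Hji Hjn Hjp.
  assert (Hjj : j <> next_site M j) by ring_sites.
  assert (Hnj : (next_site M j < M)%nat) by ring_sites.
  assert (Hcj : hop_pattern M i j = None).
  { unfold hop_pattern, set_site.
    rewrite (proj2 (Nat.eqb_neq j (next_site M i))), (proj2 (Nat.eqb_neq j i)); auto. }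
  assert (Hcnj : hop_pattern M i (next_site M j) = None).
  { unfold hop_pattern, set_site.
    rewrite (proj2 (Nat.eqb_neq (next_site M j) (next_site M i))) by ring_sites.
    rewrite (proj2 (Nat.eqb_neq (next_site M j) i)) by ring_sites. reflexivity. }
  set (c := set_site (set_site (hop_pattern M i) j true) (next_site M j) false).
  rewrite (sumL_ext _ _ (fun t => b2R (matches c t))).
  2:{ intros t Ht. apply configs_length in Ht. unfold c.
      rewrite matches_hop, matches_hop_pattern, (current_at_hop M j) by (auto; lia).
      reflexivity. }
  destruct (hop_pattern_counts M i HM Hi) as [Hk Ha].
  destruct (n_fixed_hop (hop_pattern M i) j (next_site M j) M Hj Hnj Hjj Hcj Hcnj)
    as [Hk' Ha'].
  fold c in Hk', Ha'. rewrite Hk in Hk'. rewrite Ha in Ha'.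
  rewrite sum_configs_matches.
  replace (n + 2)%nat with (n + n_forced c M)%nat by lia.
  rewrite count_matching_binom, Hk'. reflexivity.
Qed.

(* All pair moments of local currents: the diagonal is a first moment, adjacent
   hops exclude each other, and far-apart hops are counted above. *)
Lemma sum_current_product (M n i j : nat) : (4 <= M)%nat -> (i < M)%nat -> (j < M)%nat ->
  sumL (configs M (n + 2)) (fun t => current_at M i t * current_at M j t) =
    INR (binom (M - 4) n)
    + (if Nat.eqb j i then INR (binom (M - 2) (S n)) - INR (binom (M - 4) n) else 0)
    + (if Nat.eqb j (next_site M i) then - INR (binom (M - 4) n) else 0)
    + (if Nat.eqb j (prev_site M i) then - INR (binom (M - 4) n) else 0).
Proof.
  intros HM Hi Hj.
  destruct (Nat.eqb_spec j i) as [->|Hji].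
  { rewrite (sumL_ext _ _ (current_at M i)).
    2:{ intros t _. rewrite !current_at_hop by auto. apply hop_indicator_idem. }
    replace (n + 2)%nat with (S n + 1)%nat by lia. rewrite sum_current_at by lia.
    rewrite (proj2 (Nat.eqb_neq i (next_site M i))), (proj2 (Nat.eqb_neq i (prev_site M i)))
      by ring_sites.
    lra. }
  destruct (Nat.eqb_spec j (next_site M i)) as [Hjn|Hjn].
  { rewrite (sumL_ext _ _ (fun _ => 0)).
    2:{ intros t _. rewrite !current_at_hop, Hjn by auto. apply hop_indicator_chain. }
    rewrite sumL_const, (proj2 (Nat.eqb_neq j (prev_site M i))) by ring_sites. lra. }
  destruct (Nat.eqb_spec j (prev_site M i)) as [Hjp|Hjp].
  { rewrite (sumL_ext _ _ (fun _ => 0)).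
    2:{ intros t _. rewrite !current_at_hop by auto.
        replace (next_site M j) with i by ring_sites.
        rewrite Rmult_comm. apply hop_indicator_chain. }
    rewrite sumL_const. lra. }
  rewrite sum_current_product_far by (auto; lia). lra.
Qed.

(* Summing over j: one diagonal term, two vanishing neighbours, M - 3 far sites. *)
Lemma sum_current_row (M n i : nat) : (4 <= M)%nat -> (i < M)%nat ->
  sumR (fun j => sumL (configs M (n + 2)) (fun t => current_at M i t * current_at M j t)) M =
  INR (binom (M - 2) (S n)) + (INR M - 3) * INR (binom (M - 4) n).
Proof.
  intros HM Hi.
  rewrite (sumR_ext _ (fun j => INR (binom (M - 4) n)
    + (if Nat.eqb j i then INR (binom (M - 2) (S n)) - INR (binom (M - 4) n) else 0)
    + (if Nat.eqb j (next_site M i) then - INR (binom (M - 4) n) else 0)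
    + (if Nat.eqb j (prev_site M i) then - INR (binom (M - 4) n) else 0)))
    by (intros j Hj; apply sum_current_product; auto).
  rewrite !sumR_plus, sumR_const, !sumR_indicator.
  rewrite (proj2 (Nat.ltb_lt i M)), (proj2 (Nat.ltb_lt (next_site M i) M)),
    (proj2 (Nat.ltb_lt (prev_site M i) M)) by ring_sites.
  lra.
Qed.

Lemma sum_total_current_sq (M n : nat) : (4 <= M)%nat ->
  sumL (configs M (n + 2)) (fun t => total_current M t * total_current M t) =
  INR M * (INR (binom (M - 2) (S n)) + (INR M - 3) * INR (binom (M - 4) n)).
Proof.
  intros HM. unfold total_current.
  change (sumL (configs M (n + 2)) (fun t => sumL (seq 0 M) (fun i => current_at M i t)
            * sumL (seq 0 M) (fun i => current_at M i t))
          = INR M * (INR (binom (M - 2) (S n)) + (INR M - 3) * INR (binom (M - 4) n))).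
  rewrite (sumL_ext _ _ (fun t => sumL (seq 0 M) (fun i => sumL (seq 0 M)
             (fun j => current_at M i t * current_at M j t))))
    by (intros t _; apply sumL_mult).
  rewrite sumL_swap.
  rewrite (sumL_ext (seq 0 M) _
             (fun _ => INR (binom (M - 2) (S n)) + (INR M - 3) * INR (binom (M - 4) n))).
  - rewrite sumL_const, length_seq. lra.
  - intros i Hi. apply in_seq in Hi.
    rewrite (sumL_swap (configs M (n + 2)) (seq 0 M)).
    apply sum_current_row; lia.
Qed.

Lemma Var_second_moment (M N : nat) (f : list bool -> R) : length (configs M N) <> O ->
  Var M N f = sumL (configs M N) (fun t => f t * f t) / INR (length (configs M N))
              - (sumL (configs M N) f / INR (length (configs M N))) ^ 2.
Proof.
  intros H. unfold Var, Expect. fold (sumL (configs M N) f).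
  set (C := INR (length (configs M N))). set (E := sumL (configs M N) f / C).
  fold (sumL (configs M N) (fun t => (f t - E) ^ 2)).
  rewrite (sumL_ext _ _ (fun t => (f t * f t + (-2 * E) * f t) + E ^ 2)) by (intros; ring).
  rewrite !sumL_plus, sumL_scal, sumL_const. fold C.
  assert (HC : C <> 0) by (apply not_0_INR; auto).
  unfold E. field. auto.
Qed.

Lemma Var_phi_binom (mu : R) (n l : nat) :
  let M := (n + l + 4)%nat in
  Var_phi mu (n + 2) (l + 2) =
   (mu / INR M) ^ 2 *
   (INR M * (INR (binom (M - 2) (S n)) + (INR M - 3) * INR (binom (M - 4) n))
      / INR (binom M (n + 2))
    - (INR M * INR (binom (M - 2) (S n)) / INR (binom M (n + 2))) ^ 2).
Proof.
  intros M. unfold Var_phi. replace (n + 2 + (l + 2))%nat with M by (unfold M; lia).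
  assert (Hb : binom M (n + 2) <> O).
  { intro H0. pose proof (binom_fact M (n + 2) ltac:(unfold M; lia)) as Hf.
    rewrite H0 in Hf. pose proof (fact_neq_0 M). lia. }
  rewrite Var_second_moment, count_configs by (rewrite count_configs; auto).
  rewrite (sumL_ext _ _ (fun t => (mu / INR M) ^ 2 * (total_current M t * total_current M t)))
    by (intros t _; rewrite phi_total_current; ring).
  rewrite (sumL_ext _ (phi mu M) (fun t => mu / INR M * total_current M t)) by reflexivity.
  rewrite !sumL_scal, sum_total_current_sq by (unfold M; lia).
  replace (n + 2)%nat with (S n + 1)%nat at 2 by lia.
  rewrite sum_total_current by (unfold M; lia).
  replace (S n + 1)%nat with (n + 2)%nat by lia.
  assert (INR (binom M (n + 2)) <> 0) by (apply not_0_INR; auto).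
  assert (INR M <> 0) by (apply not_0_INR; unfold M; lia).
  field. auto.
Qed.

Lemma scaled_Var_phi_closed_form (mu : R) (n l : nat) :
  let N := INR n + 2 in let L := INR l + 2 in let M := N + L in
  INR (l + 2) * Var_phi mu (n + 2) (l + 2) =
  mu ^ 2 * L * N * L * (N * L - M + 1) / (M ^ 2 * (M - 1) ^ 2 * (M - 2)).
Proof.
  intros N L M. rewrite Var_phi_binom, !binom_INR by lia.
  replace (n + l + 4 - 2)%nat with (S (S (n + l))) by lia.
  replace (n + l + 4 - 4)%nat with (n + l)%nat by lia.
  replace (S (S (n + l)) - S n)%nat with (S l) by lia.
  replace (n + l - n)%nat with l by lia.
  replace (n + l + 4 - (n + 2))%nat with (S (S l)) by lia.
  replace (n + l + 4)%nat with (S (S (S (S (n + l))))) by lia.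
  replace (n + 2)%nat with (S (S n)) by lia.
  replace (l + 2)%nat with (S (S l)) by lia.
  rewrite !fact_simpl, !mult_INR, !S_INR, !plus_INR.
  assert (INR (fact n) <> 0) by (apply not_0_INR, fact_neq_0).
  assert (INR (fact l) <> 0) by (apply not_0_INR, fact_neq_0).
  assert (INR (fact (n + l)) <> 0) by (apply not_0_INR, fact_neq_0).
  pose proof (pos_INR n). pose proof (pos_INR l).
  unfold M, N, L. field. repeat split; lra.
Qed.

(* The closed form as a function of the density x = N/M and of e = 1/M. *)
Definition density_form (mu x e : R) : R :=
  mu ^ 2 * x * (1 - x) ^ 2 * (x * (1 - x) - e + e ^ 2) / ((1 - e) ^ 2 * (1 - 2 * e)).

Lemma scaled_Var_phi_density (mu : R) (n l : nat) :
  INR (l + 2) * Var_phi mu (n + 2) (l + 2) =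
  density_form mu (INR (n + 2) / INR (n + 2 + (l + 2))) (/ INR (n + 2 + (l + 2))).
Proof.
  rewrite scaled_Var_phi_closed_form. unfold density_form.
  rewrite !plus_INR. simpl (INR 2).
  pose proof (pos_INR n). pose proof (pos_INR l).
  field. repeat split; lra.
Qed.

(** * Passage to the limit *)

Lemma inv_INR_to_0 (s : nat -> nat) :
  (forall B : nat, exists K : nat, forall k, (K <= k)%nat -> (B <= s k)%nat) ->
  Un_cv (fun k => / INR (s k)) 0.
Proof.
  intros Hs eps Heps. destruct (archimed_cor1 eps Heps) as [B [HB HB0]].
  destruct (Hs B) as [K HK]. exists K. intros k Hk. specialize (HK k Hk).
  assert (H0 : 0 < INR B) by (apply lt_0_INR; lia).
  assert (H1 : INR B <= INR (s k)) by (apply le_INR; lia).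
  unfold Rdist. rewrite Rminus_0_r, Rabs_right.
  - apply Rle_lt_trans with (/ INR B); auto. apply Rinv_le_contravar; auto.
  - left. apply Rinv_0_lt_compat. lra.
Qed.

Lemma is_lim_seq_pow_const (u : nat -> R) (l : R) (p : nat) :
  is_lim_seq u l -> is_lim_seq (fun k => u k ^ p) (l ^ p).
Proof.
  intros Hu. induction p as [|p IH]; simpl.
  - apply is_lim_seq_const.
  - apply is_lim_seq_mult'; auto.
Qed.

Lemma density_form_limit (mu d : R) (x e : nat -> R) :
  Un_cv x d -> Un_cv e 0 ->
  Un_cv (fun k => density_form mu (x k) (e k)) (mu ^ 2 * d ^ 2 * (1 - d) ^ 3).
Proof.
  intros Hx He. apply is_lim_seq_Reals in Hx, He. apply is_lim_seq_Reals.
  replace (mu ^ 2 * d ^ 2 * (1 - d) ^ 3) with (density_form mu d 0)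
    by (unfold density_form; field).
  assert (H1x : is_lim_seq (fun k => 1 - x k) (1 - d))
    by (apply is_lim_seq_minus'; auto; apply is_lim_seq_const).
  assert (H1e : is_lim_seq (fun k => 1 - e k) (1 - 0))
    by (apply is_lim_seq_minus'; auto; apply is_lim_seq_const).
  unfold density_form. apply is_lim_seq_div'.
  - apply is_lim_seq_mult'; [apply is_lim_seq_mult'; [apply is_lim_seq_mult'|]|].
    + apply is_lim_seq_const.
    + exact Hx.
    + apply is_lim_seq_pow_const, H1x.
    + apply is_lim_seq_plus'; [apply is_lim_seq_minus'|apply is_lim_seq_pow_const; exact He].
      * apply is_lim_seq_mult'; auto.
      * exact He.
  - apply is_lim_seq_mult'; [apply is_lim_seq_pow_const, H1e|].
    apply is_lim_seq_minus'; [apply is_lim_seq_const|].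
    apply is_lim_seq_mult'; [apply is_lim_seq_const|exact He].
  - simpl. lra.
Qed.

Theorem mainTheorem9 (mu d : R) (hmu : 0 < mu) (hd0 : 0 < d) (hd1 : d < 1)
  (Nk Lk : nat -> nat)
  (hpos : forall k, (1 <= Nk k)%nat /\ (1 <= Lk k)%nat)
  (hNinf : forall B : nat, exists K : nat, forall k, (K <= k)%nat -> (B <= Nk k)%nat)
  (hLinf : forall B : nat, exists K : nat, forall k, (K <= k)%nat -> (B <= Lk k)%nat)
  (hratio : Un_cv (fun k => INR (Nk k) / INR (Nk k + Lk k)) d) :
  Un_cv (fun k => INR (Lk k) * Var_phi mu (Nk k) (Lk k))
        (mu ^ 2 * d ^ 2 * (1 - d) ^ 3).
Proof.
  assert (Hsize : Un_cv (fun k => / INR (Nk k + Lk k)) 0).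
  { apply inv_INR_to_0. intros B. destruct (hNinf B) as [K HK].
    exists K. intros k Hk. specialize (HK k Hk). lia. }
  pose proof (density_form_limit mu d _ _ hratio Hsize) as Hlim.
  apply is_lim_seq_Reals in Hlim. apply is_lim_seq_Reals.
  refine (is_lim_seq_ext_loc _ _ _ _ Hlim).
  (* Once both N and L are at least 2 the closed form applies. *)
  destruct (hNinf 2%nat) as [K1 HK1], (hLinf 2%nat) as [K2 HK2].
  exists (K1 + K2)%nat. intros k Hk.
  destruct (Nat.le_exists_sub 2 (Nk k) (HK1 k ltac:(lia))) as [n [Hn _]].
  destruct (Nat.le_exists_sub 2 (Lk k) (HK2 k ltac:(lia))) as [l [Hl _]].
  rewrite Hn, Hl. symmetry. apply scaled_Var_phi_density.
Qed.
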